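(* Let $\mathcal{S}=(X,\xrightarrow{\Sigma},\le)$ be a positive very-WSTS and let $x,y\in X$. Then $y$ is repeatedly coverable from $x$ if and only if there exist states $c,d$ of the stuttering automaton $\mathcal{A}_{\downarrow x}$ and $w\in\Sigma^+$ such that $d$ can be reached from $c$ by reading $w$ in $\mathcal{A}_{\downarrow x}$, $\mathrm{numaccel}(c)=\mathrm{numaccel}(d)$, $w$ is positive, and $y\in\mathrm{ideal}(c)$.
   Context: A (labeled, ordered) transition system is $\mathcal{S}=(X,\xrightarrow{\Sigma},\le)$: $X$ a set, $\Sigma$ a finite alphabet, $\xrightarrow{a}\subseteq X\times X$, $\le$ a quasi-ordering; relations extend to words ($x\xrightarrow{+}y$ means $x\xrightarrow{w}y$ for some $w\in\Sigma^+$, $x\xrightarrow{*}y$ for some $w\in\Sigma^*$). $\mathrm{Post}(x,w)=\{y:x\xrightarrow{w}y\}$, extended to sets by union; $\downarrow D=\{x:\exists y\in D,\,x\le y\}$. WSTS: $\le$ wqo and monotone ($x\xrightarrow{a}y$, $x'\ge x$ imply $x'\xrightarrow{w}y'\ge y$ for some $w$). Strong monotonicity: $x\xrightarrow{a}y$, $x'\ge x$ imply $x'\xrightarrow{a}y'$, $y'\ge y$; strong-strict: additionally $x'>x$ yields such $y'>y$. Deterministic: at most one $a$-successor. Ideals: nonempty downward-closed directed subsets; $\mathrm{Idl}(X)$. Completion $\widehat{\mathcal{S}}=(\mathrm{Idl}(X),\Rightarrow_\Sigma,\subseteq)$, $I\xRightarrow{a}J$ iff $J$ is a $\subseteq$-maximal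 ideal included in $\downarrow\mathrm{Post}(I,a)$; when deterministic, $w(I)$ is the unique $J$ with $I\xRightarrow{w}J$ if defined. $w^\infty(I)=\bigcup_kw^k(I)$ if $I\subset w(I)$, else $I$. Levels: $\mathrm{Idl}_0(X)=\mathrm{Idl}(X)$, $\mathrm{Idl}_n(X)$ = unions of strictly increasing sequences in $\mathrm{Idl}_{n-1}(X)$; finitely many levels if some $\mathrm{Idl}_n(X)=\emptyset$. Very-WSTS: WSTS with strong monotonicity whose completion is a deterministic WSTS ($\subseteq$ a wqo on ideals) with strong-strict monotonicity, and $\mathrm{Idl}(X)$ has finitely many levels. Positivity: $w$ is positive for $x$ if $x\xrightarrow{w}z$ for some $z\ge x$; $w$ is positive if it is positive for every $x$ with $\mathrm{Post}(x,w)\ne\emptyset$; $\mathcal{S}$ is positive if every word that is positive for some state is positive. $y$ is repeatedly coverable from $x$ if there are $z_0,z_1,\ldots$ with $x\xrightarrow{*}z_0\xrightarrow{+}z_1\xrightarrow{+}\cdots$ and $z_i\ge y$ for all $i$. Ideal Karp-Miller algorithm on input $(\mathcal{S},I_0)$ (terminates for very-WSTS): builds a tree with node labels $(\mathrm{ideal}(c),\mathrm{numaccel}(c))$ and letter-labeled arcs, starting with root $(I_0,0)$. While a node $c:(I,n)$ is unmarked: if a proper ancestor has ideal $I$, mark $c$; otherwise, if a proper ancestor $c'$ has $\mathrm{ideal}(c')\subset I$ and $\mathrm{numaccel}(c')=n$, relabel $c$ by $(w^\infty(I),n+1)$ with $w$ the arc-label word from $c'$ to $c$; then, with $(I,n)$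 the current label, add for each $a$ with $a(I)$ defined a child $(a(I),n)$ via an $a$-arc; mark $c$. The stuttering automaton $\mathcal{A}_{I_0}$: states are the nodes of the returned tree, all accepting, initial state the root, transitions the arcs plus an $\varepsilon$-transition from each leaf $c$ to any ancestor $c'$ with $\mathrm{ideal}(c')=\mathrm{ideal}(c)$. Reading $w$ allows $\varepsilon$-transitions. *)

From Stdlib Require Import List.
Import ListNotations.

Set Implicit Arguments.

Definition incl {X : Type} (A B : X -> Prop) : Prop := forall x, A x -> B x.
Definition seteq {X : Type} (A B : X -> Prop) : Prop := incl A B /\ incl B A.
Definition sincl {X : Type} (A B : X -> Prop) : Prop := incl A B /\ ~ incl B A.

Definition alphabet_finite (Sig : Type) : Prop := exists l : list Sig, forall a, In a l.

Section TS.
Context {X Sig : Type} (tr : Sig -> X -> X -> Prop) (le : X -> X -> Prop).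

Inductive steps : list Sig -> X -> X -> Prop :=
| steps_nil x : steps [] x x
| steps_cons a w x y z : tr a x y -> steps w y z -> steps (a :: w) x z.

Definition quasi_order : Prop :=
  (forall x, le x x) /\ (forall x y z, le x y -> le y z -> le x z).

Definition wqo : Prop :=
  quasi_order /\ forall f : nat -> X, exists i j, i < j /\ le (f i) (f j).

Definition Post (I : X -> Prop) (a : Sig) : X -> Prop :=
  fun y => exists x, I x /\ tr a x y.
Definition down (D : X -> Prop) : X -> Prop := fun x => exists y, D y /\ le x y.

Definition monotone : Prop :=
  forall a x y x', tr a x y -> le x x' ->
    exists w y', steps w x' y' /\ le y y'.

Definition strongly_monotone : Prop :=
  forall a x y x', tr a x y -> le x x' ->
    exists y', tr a x' y' /\ le y y'.

Definition WSTS : Prop := wqo /\ monotone.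

Definition is_ideal (D : X -> Prop) : Prop :=
  (exists x, D x) /\
  (forall x y, le x y -> D y -> D x) /\
  (forall x y, D x -> D y -> exists z, D z /\ le x z /\ le y z).

Definition cstep (a : Sig) (I J : X -> Prop) : Prop :=
  is_ideal I /\ is_ideal J /\ incl J (down (Post I a)) /\
  (forall K, is_ideal K -> incl K (down (Post I a)) -> incl J K -> incl K J).

Inductive csteps : list Sig -> (X -> Prop) -> (X -> Prop) -> Prop :=
| csteps_nil I : is_ideal I -> csteps [] I I
| csteps_cons a w I J K : cstep a I J -> csteps w J K -> csteps (a :: w) I K.

Definition completion_deterministic : Prop :=
  forall a I J1 J2, cstep a I J1 -> cstep a I J2 -> seteq J1 J2.

Definition ideals_wqo : Prop :=
  forall f : nat -> (X -> Prop), (forall k, is_ideal (f k)) ->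
    exists i j, i < j /\ incl (f i) (f j).

Definition completion_monotone : Prop :=
  forall a I J I', cstep a I J -> is_ideal I' -> incl I I' ->
    exists w J', csteps w I' J' /\ incl J J'.

Definition completion_strong_strict : Prop :=
  forall a I J I', cstep a I J -> is_ideal I' -> incl I I' ->
    (exists J', cstep a I' J' /\ incl J J') /\
    (sincl I I' -> exists J', cstep a I' J' /\ sincl J J').

Fixpoint level (n : nat) (D : X -> Prop) : Prop :=
  match n with
  | 0 => is_ideal D
  | S m => exists f : nat -> (X -> Prop),
      (forall k, level m (f k)) /\
      (forall k, sincl (f k) (f (S k))) /\
      seteq D (fun x => exists k, f k x)
  end.

Definition finitely_many_levels : Prop :=
  exists n, forall D, ~ level n D.

Definition very_WSTS : Prop :=
  WSTS /\ strongly_monotone /\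
  completion_deterministic /\ ideals_wqo /\ completion_monotone /\
  completion_strong_strict /\ finitely_many_levels.

Definition positive_for (w : list Sig) (x : X) : Prop :=
  exists z, steps w x z /\ le x z.

Definition positive_word (w : list Sig) : Prop :=
  forall x, (exists z, steps w x z) -> positive_for w x.

Definition positive_system : Prop :=
  forall w, (exists x, positive_for w x) -> positive_word w.

Definition repeatedly_coverable (x y : X) : Prop :=
  exists z : nat -> X,
    (exists w, steps w x (z 0)) /\
    (forall i, exists w, w <> [] /\ steps w (z i) (z (S i))) /\
    (forall i, le y (z i)).

Definition winf (w : list Sig) (I K : X -> Prop) : Prop :=
  ((exists J, csteps w I J /\ sincl I J) /\
     exists f : nat -> (X -> Prop), seteq (f 0) I /\
       (forall k, csteps w (f k) (f (S k))) /\
       seteq K (fun x => exists k, f k x))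
  \/ ((~ exists J, csteps w I J /\ sincl I J) /\ seteq K I).

(** * Output of the ideal Karp-Miller algorithm on input (S, I0).
    The tree is represented by its set of nodes, each node being identified
    with the word labelling the arcs from the root to it (children of a node
    carry distinct letters).  [labI u] and [labn u] are the final labels
    ideal(u) and numaccel(u). *)
Section KM.
Variable I0 : X -> Prop.
Variable node : list Sig -> Prop.
Variable labI : list Sig -> (X -> Prop).
Variable labn : list Sig -> nat.

(** label (P, m) of node u at its creation, before processing *)
Definition pre_label (u : list Sig) (P : X -> Prop) (m : nat) : Prop :=
  (u = [] /\ seteq P I0 /\ m = 0) \/
  (exists v a, u = v ++ [a] /\ cstep a (labI v) P /\ m = labn v).

Definition expanded (u : list Sig) : Prop :=
  forall a, node (u ++ [a]) <-> exists J, cstep a (labI u) J.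

Definition KM_output : Prop :=
  node [] /\
  (exists l : list (list Sig), forall u, node u -> In u l) /\
  (forall u a, node (u ++ [a]) -> node u) /\
  forall u, node u -> exists P m, pre_label u P m /\
    (
      ((exists v s, u = v ++ s /\ s <> [] /\ seteq (labI v) P) /\
         seteq (labI u) P /\ labn u = m /\ (forall a, ~ node (u ++ [a])))
    \/
      ((~ exists v s, u = v ++ s /\ s <> [] /\ seteq (labI v) P) /\
       (exists v s, u = v ++ s /\ s <> [] /\ labn v = m /\ sincl (labI v) P /\
          winf s P (labI u)) /\
       labn u = S m /\ expanded u)
    \/
      ((~ exists v s, u = v ++ s /\ s <> [] /\ seteq (labI v) P) /\
       (~ exists v s, u = v ++ s /\ s <> [] /\ labn v = m /\ sincl (labI v) P) /\
       seteq (labI u) P /\ labn u = m /\ expanded u)).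

(** Stuttering automaton A_{I0}: states are nodes, all accepting, initial
    state the root; arcs, plus ε-transitions from each leaf to any proper
    ancestor with the same ideal. [reads c w d]: d is reached from c by
    reading w (ε-transitions allowed). *)
Definition leaf (u : list Sig) : Prop := node u /\ forall a, ~ node (u ++ [a]).

Inductive reads : list Sig -> list Sig -> list Sig -> Prop :=
| reads_nil c : node c -> reads c [] c
| reads_letter c a w d : node c -> node (c ++ [a]) -> reads (c ++ [a]) w d ->
    reads c (a :: w) d
| reads_eps c c' w d : leaf c -> (exists s, c = c' ++ s /\ s <> []) ->
    seteq (labI c') (labI c) -> reads c' w d -> reads c w d.

End KM.
End TS.

(** The stuttering automaton simulates the system: if [p] lies in the ideal of a node [c] and
    [p -a-> q], then reading [a] from [c] (through an ε-transition first when [c] is a marked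
    leaf) reaches a node whose ideal contains [q].  Along an infinite run
    [z_0 -+-> z_1 -+-> ...] above [y] some node [c] is thus visited infinitely often, and the
    wqo yields visits [i < j] with [z_i <= z_j]; the word read in between is positive for
    [z_i], hence positive since the system is.

    Conversely, numaccel never decreases along arcs, and an ε-transition returns to an ancestor
    with the same ideal: if numaccel had grown on the way, pumping the accelerations would give
    ideals of every level.  So a reading [c -w-> d] with equal numaccel is a run of the
    deterministic completion from ideal(c), and [w] is executable from some element of
    ideal(c).  Every element of a node's ideal is coverable from [x] and ideal(c) is directed,
    so [w] is executable from a state [r >= y] reachable from [x]; by strong monotonicity and
    positivity, [w] can then be iterated forever above [r]. *)

From Pilot Require Import Defs.
From Stdlib Require Import List Lia Classical ClassicalEpsilon.
Import ListNotations.
Local Notation incl := Defs.incl.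

Lemma dependent_choice {A : Type} (P : nat -> A -> Prop) (R : nat -> A -> A -> Prop) (a0 : A) :
  P 0 a0 -> (forall n a, P n a -> exists a', P (S n) a' /\ R n a a') ->
  exists f : nat -> A, f 0 = a0 /\ forall n, P n (f n) /\ R n (f n) (f (S n)).
Proof.
  intros H0 Hstep.
  set (next n a := epsilon (inhabits a0) (fun a' => P (S n) a' /\ R n a a')).
  assert (Hnext : forall n a, P n a -> P (S n) (next n a) /\ R n a (next n a)).
  { intros n a Ha. apply epsilon_spec, Hstep, Ha. }
  set (f := fix f n := match n with 0 => a0 | S m => next m (f m) end).
  assert (Hf : forall n, P n (f n)) by (induction n; [exact H0 | exact (proj1 (Hnext n _ IHn))]).
  exists f. split; [reflexivity|]. intros n. split; [apply Hf | exact (proj2 (Hnext n _ (Hf n)))].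
Qed.

Lemma pigeonhole_infinite {T : Type} (l : list T) : forall N : nat -> T, (forall i, In (N i) l) ->
  exists c, forall m, exists i, m <= i /\ N i = c.
Proof.
  induction l as [|c l IH]; intros N HN; [destruct (HN 0)|].
  destruct (classic (forall m, exists i, m <= i /\ N i = c)) as [Hc|Hc]; [exists c; exact Hc|].
  apply not_all_ex_not in Hc as [m Hm].
  destruct (IH (fun i => N (i + m))) as [c' Hc'].
  - intros i. destruct (HN (i + m)) as [Heq|Hin]; [|exact Hin].
    exfalso. apply Hm. exists (i + m). split; [lia | exact (eq_sym Heq)].
  - exists c'. intros m'. destruct (Hc' m') as [i [Hi Heq]]. exists (i + m). split; [lia | exact Heq].
Qed.

Lemma concat_segments {Sig A : Type} (R : list Sig -> A -> A -> Prop) (f : nat -> A) (W : nat -> list Sig) :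
  (forall u v a b c, R u a b -> R v b c -> R (u ++ v) a c) ->
  (forall i, R [] (f i) (f i)) -> (forall i, R (W i) (f i) (f (S i))) ->
  forall n i, R (concat (map W (seq i n))) (f i) (f (n + i)).
Proof.
  intros Happ Hnil HW. induction n as [|n IH]; intros i; [apply Hnil|].
  replace (S n + i) with (n + S i) by lia. exact (Happ _ _ _ _ _ (HW i) (IH (S i))).
Qed.

Lemma increasing_chain_incl {X : Type} (f : nat -> X -> Prop) :
  (forall k, incl (f k) (f (S k))) -> forall i j, i <= j -> incl (f i) (f j).
Proof. intros H i j Hij. induction Hij as [|j Hij IH]; intros p Hp; [exact Hp | apply H, IH, Hp]. Qed.

Lemma decreasing_chain_incl {X : Type} (f : nat -> X -> Prop) :
  (forall k, incl (f (S k)) (f k)) -> forall i j, i <= j -> incl (f j) (f i).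
Proof. intros H i j Hij. induction Hij as [|j Hij IH]; intros p Hp; [exact Hp | apply IH, H, Hp]. Qed.

Section Sets.
Context {X : Type}.

Lemma seteq_refl (A : X -> Prop) : seteq A A.
Proof. split; intros p Hp; exact Hp. Qed.

Lemma seteq_sym (A B : X -> Prop) : seteq A B -> seteq B A.
Proof. intros [H1 H2]; split; assumption. Qed.

Lemma seteq_trans (A B C : X -> Prop) : seteq A B -> seteq B C -> seteq A C.
Proof. intros [H1 H2] [H3 H4]; split; intros p Hp; auto. Qed.

Lemma sincl_seteq (A B A' B' : X -> Prop) : seteq A A' -> seteq B B' -> sincl A B -> sincl A' B'.
Proof.
  intros [HA HA'] [HB HB'] [HAB HnBA]. split.
  - intros p Hp; auto.
  - intros HBA. apply HnBA. intros p Hp; auto.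
Qed.

End Sets.

Section Ideals.
Context {X : Type} (le : X -> X -> Prop) (Hwqo : wqo le).

Lemma wqo_refl x : le x x.
Proof. exact (proj1 (proj1 Hwqo) x). Qed.

Lemma wqo_trans x y z : le x y -> le y z -> le x z.
Proof. exact (proj2 (proj1 Hwqo) x y z). Qed.

Definition down_closed (D : X -> Prop) : Prop := forall a b, le a b -> D b -> D a.

Lemma is_ideal_seteq (A B : X -> Prop) : seteq A B -> is_ideal le A -> is_ideal le B.
Proof.
  intros [HAB HBA] [[a Ha] [Hdown Hdir]]. split; [|split].
  - exists a; auto.
  - intros p q Hpq Hq. apply HAB, (Hdown p q Hpq), HBA, Hq.
  - intros p q Hp Hq. destruct (Hdir p q (HBA _ Hp) (HBA _ Hq)) as [r [Hr Hpqr]].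
    exists r; auto.
Qed.

Lemma down_closed_down (A : X -> Prop) : down_closed (down le A).
Proof. intros p q Hpq [r [Hr Hqr]]. exists r. split; [exact Hr | exact (wqo_trans _ _ _ Hpq Hqr)]. Qed.

Lemma is_ideal_principal (p : X) : is_ideal le (down le (fun z => z = p)).
Proof.
  split; [|split].
  - exists p, p. split; [reflexivity | apply wqo_refl].
  - apply down_closed_down.
  - intros u v [u' [-> Hu]] [v' [-> Hv]]. exists p.
    split; [exists p; split; [reflexivity | apply wqo_refl] | split; assumption].
Qed.

Lemma is_ideal_union_chain (f : nat -> X -> Prop) : (forall k, is_ideal le (f k)) ->
  (forall k, incl (f k) (f (S k))) -> is_ideal le (fun p => exists k, f k p).
Proof.
  intros Hf Hinc. split; [|split].
  - destruct (Hf 0) as [[p Hp] _]. exists p, 0. exact Hp.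
  - intros p q Hpq [k Hk]. exists k. exact (proj1 (proj2 (Hf k)) p q Hpq Hk).
  - intros p q [i Hp] [j Hq]. set (m := Nat.max i j).
    assert (Hpm : f m p) by (apply (increasing_chain_incl f Hinc i); [lia | exact Hp]).
    assert (Hqm : f m q) by (apply (increasing_chain_incl f Hinc j); [lia | exact Hq]).
    destruct (proj2 (proj2 (Hf m)) p q Hpm Hqm) as [r [Hr Hpqr]].
    exists r. split; [exists m; exact Hr | exact Hpqr].
Qed.

Lemma down_closed_no_infinite_descent (D : nat -> X -> Prop) :
  (forall n, down_closed (D n)) -> (forall n, incl (D (S n)) (D n)) ->
  ~ (forall n, exists p, D n p /\ ~ D (S n) p).
Proof.
  intros Hdown Hdec Hstrict. destruct (choice _ Hstrict) as [p Hp].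
  destruct (proj2 Hwqo p) as [i [j [Hij Hle]]].
  apply (proj2 (Hp i)). apply (Hdown (S i) _ _ Hle).
  exact (decreasing_chain_incl D Hdec (S i) j Hij _ (proj1 (Hp j))).
Qed.

Lemma down_closed_descending_ind (P : (X -> Prop) -> Prop) :
  (forall D, down_closed D -> ~ P D ->
     exists D', down_closed D' /\ ~ P D' /\ incl D' D /\ exists p, D p /\ ~ D' p) ->
  forall D, down_closed D -> P D.
Proof.
  intros Hshrink D HD. apply NNPP. intros HnD.
  destruct (dependent_choice (fun _ E => down_closed E /\ ~ P E)
              (fun _ E E' => incl E' E /\ exists p, E p /\ ~ E' p) D) as [f [_ Hf]].
  - split; assumption.
  - intros _ E [HE HnE]. destruct (Hshrink E HE HnE) as [E' [HE' [HnE' HE'E]]].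
    exists E'. split; [split|]; assumption.
  - apply (down_closed_no_infinite_descent f); intros n; apply Hf.
Qed.

Definition finite_union_of_ideals (D : X -> Prop) : Prop :=
  exists L : list (X -> Prop),
    (forall I, In I L -> is_ideal le I) /\ (forall p, D p <-> exists I, In I L /\ I p).

Lemma finite_union_of_ideals_union (D D1 D2 : X -> Prop) :
  finite_union_of_ideals D1 -> finite_union_of_ideals D2 ->
  (forall p, D p <-> D1 p \/ D2 p) -> finite_union_of_ideals D.
Proof.
  intros [L1 [HL1 HD1]] [L2 [HL2 HD2]] HD. exists (L1 ++ L2). split.
  - intros I HI. apply in_app_or in HI as [HI|HI]; auto.
  - intros p. split.
    + intros Hp. destruct (proj1 (HD p) Hp) as [Hp1|Hp2].
      * destruct (proj1 (HD1 p) Hp1) as [I [HI HIp]]. exists I. split; [apply in_or_app; left|]; assumption.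
      * destruct (proj1 (HD2 p) Hp2) as [I [HI HIp]]. exists I. split; [apply in_or_app; right|]; assumption.
    + intros [I [HI HIp]]. apply HD. apply in_app_or in HI as [HI|HI].
      * left. apply HD1. exists I; split; assumption.
      * right. apply HD2. exists I; split; assumption.
Qed.

Lemma finite_union_of_ideals_directed (D : X -> Prop) : down_closed D ->
  (forall a b, D a -> D b -> exists c, D c /\ le a c /\ le b c) -> finite_union_of_ideals D.
Proof.
  intros Hdown Hdir. destruct (classic (exists p, D p)) as [Hne|Hempty].
  - exists [D]. split.
    + intros I [<-|[]]. split; [exact Hne | split; assumption].
    + intros p. split.
      * intros Hp. exists D. split; [left; reflexivity | exact Hp].
      * intros [I [[<-|[]] Hp]]. exact Hp.
  - exists []. split; [intros I []|]. intros p. split.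
    + intros Hp. exfalso. apply Hempty. exists p. exact Hp.
    + intros [I [[] _]].
Qed.

Lemma not_finite_union_of_ideals_shrink (D : X -> Prop) : down_closed D -> ~ finite_union_of_ideals D ->
  exists D', down_closed D' /\ ~ finite_union_of_ideals D' /\ incl D' D /\ exists p, D p /\ ~ D' p.
Proof.
  intros Hdown Hnot.
  set (avoid c := fun p => D p /\ ~ le c p).
  assert (Havoid : forall c, down_closed (avoid c)).
  { intros c p q Hpq [Hq Hcq]. split; [exact (Hdown p q Hpq Hq)|].
    intros Hcp. exact (Hcq (wqo_trans _ _ _ Hcp Hpq)). }
  destruct (classic (forall a b, D a -> D b -> exists c, D c /\ le a c /\ le b c)) as [Hdir|Hndir].
  { exfalso. exact (Hnot (finite_union_of_ideals_directed D Hdown Hdir)). }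
  apply not_all_ex_not in Hndir as [a Hndir]. apply not_all_ex_not in Hndir as [b Hndir].
  apply imply_to_and in Hndir as [Ha Hndir]. apply imply_to_and in Hndir as [Hb Hnc].
  (* with no common upper bound in D, D is the union of D \ ↑a and D \ ↑b *)
  assert (Hsplit : forall p, D p <-> avoid a p \/ avoid b p).
  { intros p. split.
    - intros Hp. apply NNPP. intros Hn. apply Hnc. exists p.
      split; [exact Hp | split; apply NNPP; intros Hc; apply Hn; [left|right]; split; assumption].
    - intros [[Hp _]|[Hp _]]; exact Hp. }
  assert (Hbad : exists c, D c /\ ~ finite_union_of_ideals (avoid c)).
  { apply NNPP. intros Hall. apply Hnot.
    apply (finite_union_of_ideals_union D (avoid a) (avoid b)); [| |exact Hsplit];
      apply NNPP; intros Hn; apply Hall; eauto. }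
  destruct Hbad as [c [Hc Hnc']]. exists (avoid c).
  split; [apply Havoid|]. split; [exact Hnc'|]. split; [intros p [Hp _]; exact Hp|].
  exists c. split; [exact Hc|]. intros [_ Hcc]. exact (Hcc (wqo_refl c)).
Qed.

Theorem down_closed_finite_union_of_ideals (D : X -> Prop) :
  down_closed D -> finite_union_of_ideals D.
Proof. apply down_closed_descending_ind, not_finite_union_of_ideals_shrink. Qed.

Lemma ideal_incl_member (K : X -> Prop) (L : list (X -> Prop)) :
  is_ideal le K -> (forall I, In I L -> is_ideal le I) ->
  (forall p, K p -> exists I, In I L /\ I p) -> exists I, In I L /\ incl K I.
Proof.
  intros HK. induction L as [|J L IH]; intros HL Hcov.
  { destruct HK as [[k Hk] _]. destruct (Hcov k Hk) as [I [[] _]]. }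
  destruct (classic (incl K J)) as [HKJ|HKJ]; [exists J; split; [left|]; auto|].
  destruct (classic (forall p, K p -> exists I, In I L /\ I p)) as [HcovL|HcovL].
  { destruct IH as [I [HI HKI]]; [intros I HI; apply HL; right; exact HI | exact HcovL|].
    exists I. split; [right|]; assumption. }
  (* a common upper bound of a point outside J and a point outside ⋃L lies in neither *)
  exfalso.
  apply not_all_ex_not in HKJ as [k1 Hk1]. apply imply_to_and in Hk1 as [HKk1 HJk1].
  apply not_all_ex_not in HcovL as [k2 Hk2]. apply imply_to_and in Hk2 as [HKk2 HLk2].
  destruct (proj2 (proj2 HK) k1 k2 HKk1 HKk2) as [k [Hk [Hk1k Hk2k]]].
  destruct (Hcov k Hk) as [I [[<-|HI] HIk]].
  - exact (HJk1 (proj1 (proj2 (HL J (or_introl eq_refl))) _ _ Hk1k HIk)).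
  - apply HLk2. exists I. split; [exact HI|]. exact (proj1 (proj2 (HL I (or_intror HI))) _ _ Hk2k HIk).
Qed.

Lemma exists_maximal_in_list (L : list (X -> Prop)) : forall I0, exists M,
  (M = I0 \/ In M L) /\ incl I0 M /\ forall I, In I L -> incl M I -> incl I M.
Proof.
  induction L as [|J L IH]; intros I0.
  { exists I0. split; [left; reflexivity|]. split; [intros p Hp; exact Hp | intros I []]. }
  destruct (IH I0) as [M1 [HM1 [HI0M1 Hmax1]]].
  destruct (classic (incl M1 J /\ ~ incl J M1)) as [[HM1J HJM1]|Hc].
  - destruct (IH J) as [M2 [HM2 [HJM2 Hmax2]]]. exists M2. split; [|split].
    + right. destruct HM2 as [->|HM2]; [left; reflexivity | right; exact HM2].
    + intros p Hp. apply HJM2, HM1J, HI0M1, Hp.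
    + intros I [<-|HI] HM2I; [exact HJM2 | exact (Hmax2 I HI HM2I)].
  - exists M1. split; [|split; [exact HI0M1|]].
    + destruct HM1 as [->|HM1]; [left; reflexivity | right; right; exact HM1].
    + intros I [<-|HI] HM1I; [|exact (Hmax1 I HI HM1I)].
      apply NNPP. intros Hn. exact (Hc (conj HM1I Hn)).
Qed.

Lemma wqo_good_pair_infinitely_often (z : nat -> X) (Q : nat -> Prop) :
  (forall m, exists i, m <= i /\ Q i) -> exists i j, i < j /\ Q i /\ Q j /\ le (z i) (z j).
Proof.
  intros HQ. destruct (HQ 0) as [i0 [_ Hi0]].
  destruct (dependent_choice (fun _ i => Q i) (fun _ i j => i < j) i0) as [h [_ Hh]].
  - exact Hi0.
  - intros _ i _. destruct (HQ (S i)) as [j [Hij Hj]]. exists j. split; [exact Hj | lia].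
  - assert (Hmono : forall k l, k < l -> h k < h l).
    { intros k l Hkl. induction Hkl as [|l Hkl IH]; [apply Hh | specialize (Hh l); lia]. }
    destruct (proj2 Hwqo (fun k => z (h k))) as [k [l [Hkl Hle]]].
    exists (h k), (h l). split; [exact (Hmono k l Hkl)|]. split; [apply Hh|]. split; [apply Hh | exact Hle].
Qed.

Definition maximal_ideal_in (D M : X -> Prop) : Prop :=
  is_ideal le M /\ incl M D /\
  forall M', is_ideal le M' -> incl M' D -> incl M M' -> incl M' M.

Lemma maximal_ideal_above (D K : X -> Prop) : down_closed D -> is_ideal le K -> incl K D ->
  exists M, incl K M /\ maximal_ideal_in D M.
Proof.
  intros HD HK HKD. destruct (down_closed_finite_union_of_ideals D HD) as [L [HL HLD]].
  assert (Hcov : forall K', incl K' D -> forall p, K' p -> exists I, In I L /\ I p).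
  { intros K' HK'D p Hp. apply HLD, HK'D, Hp. }
  destruct (ideal_incl_member K L HK HL (Hcov K HKD)) as [I0 [HI0 HKI0]].
  destruct (exists_maximal_in_list L I0) as [M [HM [HI0M Hmax]]].
  assert (HML : In M L) by (destruct HM as [->|HM]; assumption).
  exists M. split; [intros p Hp; apply HI0M, HKI0, Hp|]. split; [exact (HL M HML)|]. split.
  - intros p Hp. apply HLD. exists M. split; assumption.
  - intros M' HM' HM'D HMM'.
    destruct (ideal_incl_member M' L HM' HL (Hcov M' HM'D)) as [I [HI HM'I]].
    intros p Hp. exact (Hmax I HI (fun q Hq => HM'I q (HMM' q Hq)) p (HM'I p Hp)).
Qed.

End Ideals.

Section Completion.
Context {X Sig : Type} (tr : Sig -> X -> X -> Prop) (le : X -> X -> Prop).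
Context (Hwqo : wqo le) (Hsm : strongly_monotone tr le)
  (Hdet : completion_deterministic tr le) (Hss : completion_strong_strict tr le).

Lemma steps_app u v a b c : steps tr u a b -> steps tr v b c -> steps tr (u ++ v) a c.
Proof. intros H; induction H; intros; [assumption | econstructor; eauto]. Qed.

Lemma steps_mono w p q p' : steps tr w p q -> le p p' -> exists q', steps tr w p' q' /\ le q q'.
Proof.
  intros H; revert p'; induction H as [p|a w p p1 q Hp Hw IH]; intros p' Hpp'.
  - exists p'. split; [constructor | exact Hpp'].
  - destruct (Hsm _ _ _ _ Hp Hpp') as [p1' [Hp' Hp1]].
    destruct (IH _ Hp1) as [q' [Hq' Hqq']]. exists q'. split; [econstructor; eauto | exact Hqq'].
Qed.

Lemma repeatedly_coverable_of_positive_loop x r0 y v w :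
  steps tr v x r0 -> le y r0 -> w <> [] -> positive_word tr le w -> (exists r, steps tr w r0 r) ->
  repeatedly_coverable tr le x y.
Proof.
  intros Hv Hy Hw Hpos [r Hr].
  (* by strong monotonicity w stays enabled above r0, and positivity makes it climb *)
  assert (Hclimb : forall u, le r0 u -> exists u', le r0 u' /\ (steps tr w u u' /\ le u u')).
  { intros u Hu. destruct (steps_mono _ _ _ _ Hr Hu) as [r' [Hr' _]].
    destruct (Hpos u (ex_intro _ r' Hr')) as [u' [Hu' Huu']].
    exists u'. split; [exact (wqo_trans le Hwqo _ _ _ Hu Huu') | split; assumption]. }
  destruct (dependent_choice (fun _ u => le r0 u) (fun _ u u' => steps tr w u u' /\ le u u') r0)
    as [z [Hz0 Hz]].
  - apply (wqo_refl le Hwqo).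
  - intros _ u Hu. exact (Hclimb u Hu).
  - exists z. split; [exists v; rewrite Hz0; exact Hv|]. split.
    + intros i. exists w. split; [exact Hw | exact (proj1 (proj2 (Hz i)))].
    + intros i. exact (wqo_trans le Hwqo _ _ _ Hy (proj1 (Hz i))).
Qed.

Lemma cstep_seteq a I J I' J' : seteq I I' -> seteq J J' -> cstep tr le a I J -> cstep tr le a I' J'.
Proof.
  intros [HII' HI'I] [HJJ' HJ'J] [HI [HJ [HJpost HJmax]]].
  assert (Hpost : forall A B, incl A B -> incl (down le (Post tr A a)) (down le (Post tr B a))).
  { intros A B HAB p [q [[i [Hi Hiq]] Hpq]]. exists q. split; [exists i; split; auto | exact Hpq]. }
  split; [|split; [|split]].
  - exact (is_ideal_seteq le I I' (conj HII' HI'I) HI).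
  - exact (is_ideal_seteq le J J' (conj HJJ' HJ'J) HJ).
  - intros p Hp. apply (Hpost I I' HII'), HJpost, HJ'J, Hp.
  - intros K HK HKpost HJ'K p Hp. apply HJJ'.
    apply (HJmax K HK); [intros q Hq; apply (Hpost I' I HI'I), HKpost, Hq | intros q Hq; apply HJ'K, HJJ', Hq | exact Hp].
Qed.

Lemma cstep_exists a I : is_ideal le I -> (exists q, Post tr I a q) -> exists J, cstep tr le a I J.
Proof.
  intros HI [q Hq].
  destruct (maximal_ideal_above le Hwqo (down le (Post tr I a)) (down le (fun z => z = q)))
    as [M [_ HM]].
  - apply down_closed_down, Hwqo.
  - apply is_ideal_principal, Hwqo.
  - intros p [r [-> Hpr]]. exists q. split; assumption.
  - exists M. split; assumption.
Qed.

Lemma cstep_contains_down_Post a I J : cstep tr le a I J -> incl (down le (Post tr I a)) J.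
Proof.
  intros HJ p Hp.
  destruct (maximal_ideal_above le Hwqo (down le (Post tr I a)) (down le (fun z => z = p)))
    as [M [HpM HM]].
  - apply down_closed_down, Hwqo.
  - apply is_ideal_principal, Hwqo.
  - intros u [r [-> Hur]]. exact (down_closed_down le Hwqo _ u p Hur Hp).
  - apply (proj1 (Hdet a I M J (conj (proj1 HJ) HM) HJ)), HpM.
    exists p. split; [reflexivity | apply (wqo_refl le Hwqo)].
Qed.

Lemma cstep_incl a I J I' J' : cstep tr le a I J -> cstep tr le a I' J' -> incl I I' -> incl J J'.
Proof.
  intros HJ HJ' HII'. destruct (proj1 (Hss a I J I' HJ (proj1 HJ') HII')) as [J'' [HJ'' HJJ'']].
  intros p Hp. exact (proj1 (Hdet a I' J'' J' HJ'' HJ') p (HJJ'' p Hp)).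
Qed.

Lemma cstep_sincl a I J I' J' : cstep tr le a I J -> cstep tr le a I' J' -> sincl I I' -> sincl J J'.
Proof.
  intros HJ HJ' HII'. destruct (proj2 (Hss a I J I' HJ (proj1 HJ') (proj1 HII')) HII') as [J'' [HJ'' HJJ'']].
  exact (sincl_seteq J J'' J J' (seteq_refl J) (Hdet a I' J'' J' HJ'' HJ') HJJ'').
Qed.

Lemma csteps_ideal w I J : csteps tr le w I J -> is_ideal le I /\ is_ideal le J.
Proof. intros H; induction H as [I HI|a w I J K HIJ HJK IH]; [split; assumption | split; [apply HIJ | apply IH]]. Qed.

Lemma csteps_snoc w a I J K : csteps tr le w I J -> cstep tr le a J K -> csteps tr le (w ++ [a]) I K.
Proof.
  intros H; induction H as [I HI|b w I J' J HIJ' HJ' IH]; intros HJK.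
  - econstructor; [exact HJK|]. constructor. exact (proj1 (proj2 HJK)).
  - econstructor; [exact HIJ' | exact (IH HJK)].
Qed.

Lemma csteps_seteq_source w I J I' : csteps tr le w I J -> seteq I I' -> exists J', csteps tr le w I' J'.
Proof.
  intros H HII'. destruct H as [I HI|a w I J K HIJ HJK].
  - exists I'. constructor. exact (is_ideal_seteq le I I' HII' HI).
  - exists K. econstructor; [|exact HJK]. exact (cstep_seteq a I J I' J HII' (seteq_refl J) HIJ).
Qed.

Lemma csteps_det w I J : csteps tr le w I J ->
  forall I' J', csteps tr le w I' J' -> seteq I I' -> seteq J J'.
Proof.
  intros H; induction H as [I HI|a w I J K HIJ HJK IH]; intros I' K' H' HII'; inversion H'; subst.
  - exact HII'.
  - apply (IH J0); [assumption|].
    apply (Hdet a I'); [|assumption]. exact (cstep_seteq a I J I' J HII' (seteq_refl J) HIJ).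
Qed.

Lemma csteps_strict w I J I' : csteps tr le w I J -> is_ideal le I' -> sincl I I' ->
  exists J', csteps tr le w I' J' /\ sincl J J'.
Proof.
  intros H; revert I'; induction H as [I HI|a w I J K HIJ HJK IH]; intros I' HI' HII'.
  - exists I'. split; [constructor; exact HI' | exact HII'].
  - destruct (proj2 (Hss a I J I' HIJ HI' (proj1 HII')) HII') as [J' [HIJ' HJJ']].
    destruct (IH J' (proj1 (proj2 HIJ')) HJJ') as [K' [HJK' HKK']].
    exists K'. split; [econstructor; eauto | exact HKK'].
Qed.

Lemma csteps_sincl w I J I' J' : csteps tr le w I J -> csteps tr le w I' J' -> sincl I I' -> sincl J J'.
Proof.
  intros HJ HJ' HII'.
  destruct (csteps_strict w I J I' HJ (proj1 (csteps_ideal w I' J' HJ')) HII') as [J'' [HJ'' HJJ'']].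
  exact (sincl_seteq J J'' J J' (seteq_refl J) (csteps_det w I' J'' HJ'' I' J' HJ' (seteq_refl I')) HJJ'').
Qed.

Lemma csteps_covered w I K : csteps tr le w I K -> forall k, K k ->
  exists i r, I i /\ steps tr w i r /\ le k r.
Proof.
  intros H; induction H as [I HI|a w I J K HIJ HJK IH]; intros k Hk.
  - exists k, k. split; [exact Hk | split; [constructor | apply (wqo_refl le Hwqo)]].
  - destruct (IH k Hk) as [j [r [Hj [Hjr Hkr]]]].
    destruct (proj1 (proj2 (proj2 HIJ)) j Hj) as [q [[i [Hi Hiq]] Hjq]].
    destruct (steps_mono _ _ _ _ Hjr Hjq) as [r' [Hqr' Hrr']].
    exists i, r'. split; [exact Hi | split; [econstructor; eauto | exact (wqo_trans le Hwqo _ _ _ Hkr Hrr')]].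
Qed.

Lemma level_seteq n D D' : seteq D D' -> level le n D -> level le n D'.
Proof.
  destruct n as [|n]; [apply is_ideal_seteq|].
  intros HDD' [f [Hf [Hfs HD]]]. exists f. split; [exact Hf | split; [exact Hfs|]].
  exact (seteq_trans _ _ _ (seteq_sym _ _ HDD') HD).
Qed.

Lemma level_pred n D : level le (S n) D -> level le n D.
Proof.
  revert D; induction n as [|n IH]; intros D [f [Hf [Hfs HD]]].
  - apply (is_ideal_seteq le _ D (seteq_sym _ _ HD)).
    apply (is_ideal_union_chain le f Hf). intros k. exact (proj1 (Hfs k)).
  - exists f. split; [intros k; exact (IH _ (Hf k)) | split; assumption].
Qed.

Lemma level_antimono m n D : m <= n -> level le n D -> level le m D.
Proof. intros Hmn; induction Hmn as [|n Hmn IH]; intros HD; [exact HD | exact (IH (level_pred n D HD))]. Qed.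

Lemma level_is_ideal n D : level le n D -> is_ideal le D.
Proof. apply (level_antimono 0 n); lia. Qed.

Lemma cstep_union_chain a I J (f g : nat -> X -> Prop) :
  (forall k, incl (f k) (f (S k))) -> seteq I (fun p => exists k, f k p) ->
  cstep tr le a I J -> (forall k, cstep tr le a (f k) (g k)) ->
  seteq J (fun p => exists k, g k p).
Proof.
  intros Hinc HI HJ Hg. split.
  - intros p Hp. destruct (proj1 (proj2 (proj2 HJ)) p Hp) as [q [[i [Hi Hiq]] Hpq]].
    destruct (proj1 HI i Hi) as [k Hk]. exists k.
    apply (cstep_contains_down_Post a (f k) (g k) (Hg k)).
    exists q. split; [exists i; split; assumption | exact Hpq].
  - intros p [k Hk]. apply (cstep_incl a (f k) (g k) I J (Hg k) HJ); [|exact Hk].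
    intros q Hq. apply HI. exists k. exact Hq.
Qed.

Lemma level_cstep n : forall a I J, level le n I -> cstep tr le a I J -> level le n J.
Proof.
  induction n as [|n IH]; intros a I J HI HJ; [exact (proj1 (proj2 HJ))|].
  destruct HI as [f [Hf [Hfs HIf]]].
  assert (Hfinc : forall i j, i <= j -> incl (f i) (f j))
    by (apply increasing_chain_incl; intros k; exact (proj1 (Hfs k))).
  destruct (proj1 (proj2 HJ)) as [[j Hj] _].
  destruct (proj1 (proj2 (proj2 HJ)) j Hj) as [q [[i [Hi Hiq]] _]].
  destruct (proj1 HIf i Hi) as [N HN].
  (* a is enabled on f N, hence on the tail h of the chain *)
  set (h k := f (k + N)).
  assert (Hh : forall k, exists G, cstep tr le a (h k) G).
  { intros k. apply cstep_exists; [exact (level_is_ideal n _ (Hf _))|].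
    exists q, i. split; [apply (Hfinc N); [lia | exact HN] | exact Hiq]. }
  destruct (choice _ Hh) as [g Hg].
  exists g. split; [|split].
  - intros k. exact (IH a (h k) (g k) (Hf _) (Hg k)).
  - intros k. exact (cstep_sincl a (h k) (g k) (h (S k)) (g (S k)) (Hg k) (Hg (S k)) (Hfs _)).
  - apply (cstep_union_chain a I J h g); [intros k; exact (proj1 (Hfs _)) | | exact HJ | exact Hg].
    apply (seteq_trans _ _ _ HIf). split.
    + intros p [k Hk]. exists k. apply (Hfinc k); [lia | exact Hk].
    + intros p [k Hk]. exists (k + N). exact Hk.
Qed.

Lemma level_csteps n w I J : csteps tr le w I J -> level le n I -> level le n J.
Proof.
  intros H; induction H as [I HI|a w I J K HIJ HJK IH]; intros HnI; [exact HnI|].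
  exact (IH (level_cstep n a I J HnI HIJ)).
Qed.

Definition pumps (s : list Sig) (P : X -> Prop) : Prop :=
  exists J, csteps tr le s P J /\ sincl P J.

Lemma pumping_chain_strict s P (f : nat -> X -> Prop) : pumps s P -> seteq (f 0) P ->
  (forall k, csteps tr le s (f k) (f (S k))) -> forall k, sincl (f k) (f (S k)).
Proof.
  intros [J [HJ HPJ]] Hf0 Hf k. induction k as [|k IH].
  - apply (sincl_seteq P J); [apply seteq_sym, Hf0 | | exact HPJ].
    exact (csteps_det s P J HJ (f 0) (f 1) (Hf 0) (seteq_sym _ _ Hf0)).
  - exact (csteps_sincl s _ _ _ _ (Hf k) (Hf (S k)) IH).
Qed.

Lemma winf_incl s P K : winf tr le s P K -> incl P K.
Proof.
  intros [[_ [f [Hf0 [_ HK]]]] | [_ HK]] p Hp.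
  - apply HK. exists 0. apply Hf0, Hp.
  - apply HK, Hp.
Qed.

Lemma winf_level n s P K : level le n P -> pumps s P -> winf tr le s P K -> level le (S n) K.
Proof.
  intros HP Hpump [[_ [f [Hf0 [Hf HK]]]] | [Hno _]]; [|contradiction].
  exists f. split; [|split; [exact (pumping_chain_strict s P f Hpump Hf0 Hf) | exact HK]].
  intros k. induction k as [|k IH].
  - exact (level_seteq n _ _ (seteq_sym _ _ Hf0) HP).
  - exact (level_csteps n s _ _ (Hf k) IH).
Qed.

Lemma winf_ideal s P K : is_ideal le P -> winf tr le s P K -> is_ideal le K.
Proof.
  intros HP Hw. pose proof Hw as [[Hpump _] | [_ HK]].
  - exact (level_is_ideal 1 K (winf_level 0 s P K HP Hpump Hw)).
  - exact (is_ideal_seteq le P K (seteq_sym _ _ HK) HP).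
Qed.

Definition coverable_from (x0 : X) (I : X -> Prop) : Prop :=
  forall p, I p -> exists v r, steps tr v x0 r /\ le p r.

Lemma coverable_from_principal x0 : coverable_from x0 (down le (fun z => z = x0)).
Proof. intros p [q [-> Hpq]]. exists [], x0. split; [constructor | exact Hpq]. Qed.

Lemma coverable_from_incl x0 I J : incl I J -> coverable_from x0 J -> coverable_from x0 I.
Proof. intros HIJ HJ p Hp. exact (HJ p (HIJ p Hp)). Qed.

Lemma coverable_from_cstep x0 a I J : coverable_from x0 I -> cstep tr le a I J -> coverable_from x0 J.
Proof.
  intros HI HJ p Hp.
  destruct (proj1 (proj2 (proj2 HJ)) p Hp) as [q [[i [Hi Hiq]] Hpq]].
  destruct (HI i Hi) as [v [r [Hv Hir]]].
  destruct (Hsm _ _ _ _ Hiq Hir) as [r' [Hrr' Hqr']].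
  exists (v ++ [a]), r'. split.
  - apply (steps_app _ _ _ _ _ Hv). econstructor; [exact Hrr' | constructor].
  - exact (wqo_trans le Hwqo _ _ _ Hpq Hqr').
Qed.

Lemma coverable_from_csteps x0 w I J : csteps tr le w I J -> coverable_from x0 I -> coverable_from x0 J.
Proof.
  intros H; induction H as [I HI|a w I J K HIJ HJK IH]; intros HcI; [exact HcI|].
  exact (IH (coverable_from_cstep x0 a I J HcI HIJ)).
Qed.

Lemma coverable_from_winf x0 s P K : coverable_from x0 P -> winf tr le s P K -> coverable_from x0 K.
Proof.
  intros HP [[_ [f [Hf0 [Hf HK]]]] | [_ HK]].
  - assert (Hfk : forall k, coverable_from x0 (f k)).
    { intros k. induction k as [|k IH].
      - exact (coverable_from_incl x0 _ _ (proj1 Hf0) HP).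
      - exact (coverable_from_csteps x0 s _ _ (Hf k) IH). }
    intros p Hp. destruct (proj1 HK p Hp) as [k Hk]. exact (Hfk k p Hk).
  - exact (coverable_from_incl x0 _ _ (proj1 HK) HP).
Qed.


Section KarpMiller.
Context (Hlev : finitely_many_levels le) (Hpos : positive_system tr le).
Context (x0 : X) (node : list Sig -> Prop) (labI : list Sig -> X -> Prop) (labn : list Sig -> nat)
  (HKM : KM_output tr le (down le (fun z => z = x0)) node labI labn).

Lemma node_prefix s u : node (u ++ s) -> node u.
Proof.
  revert u; induction s as [|a s IH] using rev_ind; intros u Hn.
  - rewrite app_nil_r in Hn. exact Hn.
  - apply IH. rewrite app_assoc in Hn. exact (proj1 (proj2 (proj2 HKM)) _ _ Hn).
Qed.

Lemma root_label : seteq (labI []) (down le (fun z => z = x0)).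
Proof.
  destruct (proj2 (proj2 (proj2 HKM)) [] (proj1 HKM)) as [P [m [Hpre Hcase]]].
  destruct Hpre as [[_ [HP _]] | [v [b [Habs _]]]]; [|destruct v; discriminate].
  destruct Hcase as [[[v [s [Hvs [Hs _]]]] _] | [[_ [[v [s [Hvs [Hs _]]]] _]] | [_ [_ [HrP _]]]]];
    [| |exact (seteq_trans _ _ _ HrP HP)];
    exfalso; apply Hs; symmetry in Hvs; exact (proj2 (app_eq_nil _ _ Hvs)).
Qed.

Lemma node_snoc_label u a : node (u ++ [a]) -> exists P, cstep tr le a (labI u) P /\
  ((labn (u ++ [a]) = labn u /\ seteq (labI (u ++ [a])) P) \/
   (labn (u ++ [a]) = S (labn u) /\ exists v s, u ++ [a] = v ++ s /\ s <> [] /\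
      labn v = labn u /\ sincl (labI v) P /\ winf tr le s P (labI (u ++ [a])))).
Proof.
  intros Hn. destruct (proj2 (proj2 (proj2 HKM)) _ Hn) as [P [m [Hpre Hcase]]].
  destruct Hpre as [[Habs _] | [v [b [Heq [HP ->]]]]]; [destruct u; discriminate|].
  apply app_inj_tail in Heq as [<- <-].
  exists P. split; [exact HP|].
  destruct Hcase as [[_ [HuP [Hm _]]] | [[_ [[v [s Hvs]] [Hm _]]] | [_ [_ [HuP [Hm _]]]]]].
  - left. split; assumption.
  - right. split; [exact Hm|]. exists v, s. exact Hvs.
  - left. split; assumption.
Qed.

Lemma labn_mono u s : node (u ++ s) -> labn u <= labn (u ++ s).
Proof.
  induction s as [|a s IH] using rev_ind; intros Hn; [rewrite app_nil_r; lia|].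
  rewrite app_assoc in *. pose proof (IH (node_prefix [a] _ Hn)).
  destruct (node_snoc_label _ _ Hn) as [P [_ [[Hm _] | [Hm _]]]]; lia.
Qed.

Lemma node_ideal u : node u -> is_ideal le (labI u).
Proof.
  destruct u as [|a u] using rev_ind; intros Hn.
  - exact (is_ideal_seteq le _ _ (seteq_sym _ _ root_label) (is_ideal_principal le Hwqo x0)).
  - destruct (node_snoc_label u a Hn) as [P [HP [[_ HuP] | [_ [v [s [_ [_ [_ [_ Hw]]]]]]]]]].
    + exact (is_ideal_seteq le _ _ (seteq_sym _ _ HuP) (proj1 (proj2 HP))).
    + exact (winf_ideal s P _ (proj1 (proj2 HP)) Hw).
Qed.

Lemma branch_csteps v s : node (v ++ s) -> labn (v ++ s) = labn v ->
  exists K, csteps tr le s (labI v) K /\ seteq K (labI (v ++ s)).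
Proof.
  induction s as [|a s IH] using rev_ind; intros Hn Hl.
  - rewrite app_nil_r in *. exists (labI v).
    split; [constructor; exact (node_ideal v Hn) | apply seteq_refl].
  - rewrite app_assoc in *. pose proof (labn_mono v s (node_prefix [a] _ Hn)).
    destruct (node_snoc_label _ _ Hn) as [P [HP [[Hm HvsP] | [Hm _]]]]; [|lia].
    destruct (IH (node_prefix [a] _ Hn)) as [K [HK HKvs]]; [lia|].
    exists P. split; [|exact (seteq_sym _ _ HvsP)].
    apply (csteps_snoc s a _ K P HK). exact (cstep_seteq a _ P K P (seteq_sym _ _ HKvs) (seteq_refl P) HP).
Qed.

Lemma accel_arc_pumps u a P v s : node (u ++ [a]) -> cstep tr le a (labI u) P ->
  u ++ [a] = v ++ s -> s <> [] -> labn v = labn u -> sincl (labI v) P -> pumps s P.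
Proof.
  intros Hn HP Heq Hs Hl HvP.
  destruct (exists_last Hs) as [s' [b ->]].
  rewrite app_assoc in Heq. apply app_inj_tail in Heq as [-> <-].
  destruct (branch_csteps v s' (node_prefix [a] _ Hn) (eq_sym Hl)) as [K [HK HKu]].
  assert (Hrun : csteps tr le (s' ++ [a]) (labI v) P).
  { apply (csteps_snoc s' a _ K P HK). exact (cstep_seteq a _ P K P (seteq_sym _ _ HKu) (seteq_refl P) HP). }
  exact (csteps_strict _ _ _ P Hrun (proj1 (proj2 HP)) HvP).
Qed.

Lemma node_snoc_cases u a : node (u ++ [a]) -> exists P, cstep tr le a (labI u) P /\
  incl P (labI (u ++ [a])) /\
  ((labn (u ++ [a]) = labn u /\ seteq (labI (u ++ [a])) P) \/
   (labn (u ++ [a]) = S (labn u) /\ exists s, pumps s P /\ winf tr le s P (labI (u ++ [a])))).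
Proof.
  intros Hn. destruct (node_snoc_label u a Hn)
    as [P [HP [[Hm HuP] | [Hm [v [s [Heq [Hs [Hl [HvP Hw]]]]]]]]]]; exists P; split; try exact HP.
  - split; [exact (proj2 HuP) | left; split; assumption].
  - split; [exact (winf_incl s P _ Hw)|]. right. split; [exact Hm|].
    exists s. split; [exact (accel_arc_pumps u a P v s Hn HP Heq Hs Hl HvP) | exact Hw].
Qed.

Lemma level_branch u s n : node (u ++ s) -> level le n (labI u) ->
  level le (n + (labn (u ++ s) - labn u)) (labI (u ++ s)).
Proof.
  induction s as [|a s IH] using rev_ind; intros Hn HnI.
  - rewrite app_nil_r. replace (n + (labn u - labn u)) with n by lia. exact HnI.
  - rewrite app_assoc in *. pose proof (labn_mono u s (node_prefix [a] _ Hn)).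
    pose proof (IH (node_prefix [a] _ Hn) HnI) as Hus.
    destruct (node_snoc_cases _ _ Hn) as [P [HP [_ [[Hm HusP] | [Hm [s' [Hpump Hw]]]]]]].
    + rewrite Hm. exact (level_seteq _ _ _ (seteq_sym _ _ HusP) (level_cstep _ _ _ _ Hus HP)).
    + replace (n + (labn ((u ++ s) ++ [a]) - labn u)) with (S (n + (labn (u ++ s) - labn u))) by lia.
      exact (winf_level _ s' P _ (level_cstep _ _ _ _ Hus HP) Hpump Hw).
Qed.

Lemma same_ideal_ancestor_labn v s : node (v ++ s) -> seteq (labI v) (labI (v ++ s)) ->
  labn (v ++ s) = labn v.
Proof.
  intros Hn Heq. pose proof (labn_mono v s Hn).
  set (d := labn (v ++ s) - labn v).
  (* going down the branch from v raises the level by d and comes back to the same ideal *)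
  assert (Hpump : forall k, level le (k * d) (labI v)).
  { intros k. induction k as [|k IH]; [exact (node_ideal v (node_prefix s v Hn))|].
    replace (S k * d) with (k * d + d) by lia.
    exact (level_seteq _ _ _ (seteq_sym _ _ Heq) (level_branch v s (k * d) Hn IH)). }
  destruct Hlev as [N HN]. apply NNPP. intros Hne. apply (HN (labI v)).
  assert (Hd : 1 <= d) by (unfold d; lia).
  apply (level_antimono N (N * d)); [nia | apply Hpump].
Qed.

Lemma reads_completion_run c w d : reads node labI c w d ->
  labn c <= labn d /\ (labn c = labn d -> exists K, csteps tr le w (labI c) K).
Proof.
  intros H.
  induction H as [c Hc | c a w d Hc Hca Hr [Hle IH] | c c' w d Hleaf [s [-> Hs]] Heq Hr [Hle IH]].
  - split; [lia|]. intros _. exists (labI c). constructor. exact (node_ideal c Hc).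
  - destruct (node_snoc_cases c a Hca) as [P [HP [_ [[Hm HcaP] | [Hm _]]]]];
      split; [lia | | lia | intros Hl; lia].
    intros Hl. destruct IH as [K HK]; [lia|]. exists K. econstructor; [|exact HK].
    exact (cstep_seteq a _ _ _ _ (seteq_refl _) (seteq_sym _ _ HcaP) HP).
  - pose proof (same_ideal_ancestor_labn c' s (proj1 Hleaf) Heq).
    split; [lia|]. intros Hl. destruct IH as [K HK]; [lia|].
    exact (csteps_seteq_source w _ K _ HK Heq).
Qed.

Lemma node_coverable u : node u -> coverable_from x0 (labI u).
Proof.
  induction u as [|a u IH] using rev_ind; intros Hn.
  - exact (coverable_from_incl x0 _ _ (proj1 root_label) (coverable_from_principal x0)).
  - destruct (node_snoc_cases u a Hn) as [P [HP [_ [[_ HuP] | [_ [s [_ Hw]]]]]]];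
      pose proof (coverable_from_cstep x0 a _ P (IH (node_prefix [a] u Hn)) HP) as HcP.
    + exact (coverable_from_incl x0 _ _ (proj1 HuP) HcP).
    + exact (coverable_from_winf x0 s P _ HcP Hw).
Qed.

Lemma repeatedly_coverable_of_reads c d w y : node c -> w <> [] -> reads node labI c w d ->
  labn c = labn d -> positive_word tr le w -> labI c y -> repeatedly_coverable tr le x0 y.
Proof.
  intros Hc Hw Hr Hl Hposw Hy.
  destruct (proj2 (reads_completion_run c w d Hr) Hl) as [K HK].
  destruct (proj2 (csteps_ideal w _ K HK)) as [[k Hk] _].
  destruct (csteps_covered w _ K HK k Hk) as [i [r [Hi [Hir _]]]].
  destruct (proj2 (proj2 (node_ideal c Hc)) y i Hy Hi) as [z [Hz [Hyz Hiz]]].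
  destruct (node_coverable c Hc z Hz) as [v [r0 [Hv Hzr0]]].
  destruct (steps_mono w i r r0 Hir (wqo_trans le Hwqo _ _ _ Hiz Hzr0)) as [r' [Hr' _]].
  exact (repeatedly_coverable_of_positive_loop x0 r0 y v w Hv (wqo_trans le Hwqo _ _ _ Hyz Hzr0)
           Hw Hposw (ex_intro _ r' Hr')).
Qed.

Lemma reads_app c u d v e : reads node labI c u d -> reads node labI d v e -> reads node labI c (u ++ v) e.
Proof. intros H; induction H; intros; simpl; [assumption | econstructor | eapply reads_eps]; eauto. Qed.

Lemma reads_nodes c w d : reads node labI c w d -> node c /\ node d.
Proof. intros H; induction H as [| | c c' w d Hleaf _ _ _ [_ Hd]]; [| |split; [apply Hleaf|]]; tauto. Qed.

Lemma node_marked_or_expanded c : node c ->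
  (leaf node c /\ exists v s, c = v ++ s /\ s <> [] /\ seteq (labI v) (labI c))
  \/ expanded tr le node labI c.
Proof.
  intros Hn. destruct (proj2 (proj2 (proj2 HKM)) c Hn) as [P [m [_ Hcase]]].
  destruct Hcase as [[[v [s [Hc [Hs HvP]]]] [HcP [_ Hnoch]]] | [[_ [_ [_ He]]] | [_ [_ [_ [_ He]]]]]];
    [left | right; exact He | right; exact He].
  split; [split; assumption|]. exists v, s.
  split; [exact Hc | split; [exact Hs | exact (seteq_trans _ _ _ HvP (seteq_sym _ _ HcP))]].
Qed.

Lemma expanded_reads_letter c a p q : node c -> expanded tr le node labI c -> labI c p -> tr a p q ->
  exists d, reads node labI c [a] d /\ labI d q.
Proof.
  intros Hc He Hp Hpq.
  destruct (cstep_exists a (labI c) (node_ideal c Hc)) as [J HJ]; [exists q, p; split; assumption|].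
  assert (Hca : node (c ++ [a])) by (apply He; exists J; exact HJ).
  destruct (node_snoc_cases c a Hca) as [P [HP [HPca _]]].
  exists (c ++ [a]). split.
  - apply reads_letter; [exact Hc | exact Hca | constructor; exact Hca].
  - apply HPca, (cstep_contains_down_Post a (labI c) P HP).
    exists q. split; [exists p; split; assumption | apply (wqo_refl le Hwqo)].
Qed.

Lemma reads_simulates_tr c a p q : node c -> labI c p -> tr a p q ->
  exists d, reads node labI c [a] d /\ labI d q.
Proof.
  intros Hc Hp Hpq.
  destruct (node_marked_or_expanded c Hc) as [[Hleaf [v [s [-> [Hs Hv]]]]] | He];
    [|exact (expanded_reads_letter c a p q Hc He Hp Hpq)].
  (* the ancestor v of a marked leaf has a proper descendant, so it is expanded *)
  assert (HvN : node v) by exact (node_prefix s v (proj1 Hleaf)).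
  destruct (node_marked_or_expanded v HvN) as [[[_ Hvleaf] _] | Hve].
  - exfalso. destruct s as [|b s]; [exact (Hs eq_refl)|].
    apply (Hvleaf b), (node_prefix s). rewrite <- app_assoc. exact (proj1 Hleaf).
  - destruct (expanded_reads_letter v a p q HvN Hve (proj2 Hv p Hp) Hpq) as [d [Hd Hdq]].
    exists d. split; [|exact Hdq].
    eapply reads_eps; [exact Hleaf | exists s; split; [reflexivity | exact Hs] | exact Hv | exact Hd].
Qed.

Lemma reads_simulates_steps w p q : steps tr w p q -> forall c, node c -> labI c p ->
  exists d, reads node labI c w d /\ labI d q.
Proof.
  intros H; induction H as [p | a w p p1 q Hpp1 Hp1q IH]; intros c Hc Hp.
  - exists c. split; [constructor; exact Hc | exact Hp].
  - destruct (reads_simulates_tr c a p p1 Hc Hp Hpp1) as [c1 [Hc1 Hp1c1]].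
    destruct (IH c1 (proj2 (reads_nodes _ _ _ Hc1)) Hp1c1) as [d [Hd Hqd]].
    exists d. split; [exact (reads_app c [a] c1 w d Hc1 Hd) | exact Hqd].
Qed.

Lemma reads_along_run (z : nat -> X) (W : nat -> list Sig) c0 : node c0 -> labI c0 (z 0) ->
  (forall n, steps tr (W n) (z n) (z (S n))) -> exists N : nat -> list Sig,
  forall n, (node (N n) /\ labI (N n) (z n)) /\ reads node labI (N n) (W n) (N (S n)).
Proof.
  intros Hc0 Hzc0 HW.
  destruct (dependent_choice (fun n c => node c /\ labI c (z n))
              (fun n c d => reads node labI c (W n) d) c0) as [N [_ HN]].
  - split; assumption.
  - intros n c [Hc Hzc].
    destruct (reads_simulates_steps _ _ _ (HW n) c Hc Hzc) as [d [Hd Hzd]].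
    exists d. split; [split; [exact (proj2 (reads_nodes _ _ _ Hd)) | exact Hzd] | exact Hd].
  - exists N. exact HN.
Qed.

Lemma reads_loop_of_repeatedly_coverable y : repeatedly_coverable tr le x0 y ->
  exists c w, node c /\ w <> [] /\ reads node labI c w c /\ positive_word tr le w /\ labI c y.
Proof.
  intros [z [[w0 Hw0] [Hz Hy]]].
  destruct (choice _ Hz) as [W HW].
  assert (Hroot : labI [] x0)
    by (apply root_label; exists x0; split; [reflexivity | apply (wqo_refl le Hwqo)]).
  destruct (reads_simulates_steps w0 x0 (z 0) Hw0 [] (proj1 HKM) Hroot) as [d0 [Hd0 Hzd0]].
  destruct (reads_along_run z W d0 (proj2 (reads_nodes _ _ _ Hd0)) Hzd0 (fun n => proj2 (HW n)))
    as [N HN].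
  destruct (proj1 (proj2 HKM)) as [l Hl].
  destruct (pigeonhole_infinite l N (fun i => Hl _ (proj1 (proj1 (HN i))))) as [c Hc].
  destruct (wqo_good_pair_infinitely_often le Hwqo z (fun i => N i = c) Hc)
    as [i [j [Hij [Hi [Hj Hzij]]]]].
  set (w := concat (map W (seq i (j - i)))).
  assert (Hsteps : steps tr w (z i) (z j)).
  { replace (z j) with (z (j - i + i)) by (f_equal; lia).
    apply (concat_segments (steps tr) z W); [exact steps_app | constructor | intros k; exact (proj2 (HW k))]. }
  assert (Hreads : reads node labI (N i) w (N j)).
  { replace (N j) with (N (j - i + i)) by (f_equal; lia).
    apply (concat_segments (fun u c d => reads node labI c u d) N W).
    - intros u v a b e Hab Hbe. exact (reads_app a u b v e Hab Hbe).
    - intros k. constructor. exact (proj1 (proj1 (HN k))).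
    - intros k. exact (proj2 (HN k)). }
  assert (Hw : w <> []).
  { unfold w. destruct (j - i) as [|n] eqn:Hji; [lia|]. simpl. intros Hnil.
    exact (proj1 (HW i) (proj1 (app_eq_nil _ _ Hnil))). }
  destruct (proj1 (HN i)) as [HNi HzNi]. rewrite Hi in HNi, HzNi, Hreads. rewrite Hj in Hreads.
  exists c, w. split; [exact HNi|]. split; [exact Hw|]. split; [exact Hreads|]. split.
  - exact (Hpos w (ex_intro _ (z i) (ex_intro _ (z j) (conj Hsteps Hzij)))).
  - exact (proj1 (proj2 (node_ideal c HNi)) y (z i) (Hy i) HzNi).
Qed.

End KarpMiller.
End Completion.


Theorem proposition17 (X Sig : Type) (tr : Sig -> X -> X -> Prop)
  (le : X -> X -> Prop)
  (Hfin : alphabet_finite Sig)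
  (Hvery : very_WSTS tr le)
  (Hpos : positive_system tr le)
  (x y : X)
  (node : list Sig -> Prop) (labI : list Sig -> (X -> Prop))
  (labn : list Sig -> nat)
  (HKM : KM_output tr le (down le (fun z => z = x)) node labI labn) :
  repeatedly_coverable tr le x y <->
  exists (c d : list Sig) (w : list Sig),
    node c /\ node d /\ w <> [] /\
    reads node labI c w d /\ labn c = labn d /\
    positive_word tr le w /\ labI c y.
Proof.
  destruct Hvery as [[Hwqo _] [Hsm [Hdet [_ [_ [Hss Hlev]]]]]].
  split.
  - intros Hrep.
    destruct (reads_loop_of_repeatedly_coverable tr le Hwqo Hdet Hss Hpos x node labI labn HKM y Hrep)
      as [c [w [Hc [Hw [Hcwc [Hposw Hy]]]]]].
    exists c, c, w. repeat split; assumption.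
  - intros [c [d [w [Hc [_ [Hw [Hcwd [Hl [Hposw Hy]]]]]]]]].
    exact (repeatedly_coverable_of_reads tr le Hwqo Hsm Hdet Hss Hlev x node labI labn HKM
             c d w y Hc Hw Hcwd Hl Hposw Hy).
Qed.
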